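(* Let $T$ be a bounded saturation theory, let $P$ and $E$ be finite sets of predicates of $T$, let $e := \bigvee_{e_i\in E} e_i$, and let $\tau_e := \mathit{SDP}_T(P \cup \widetilde{P}, E)$. Then for every $P' \subseteq P \cup \widetilde{P}$ representing a minterm over $P$ (i.e. for every $p\in P$, $p \in P'$ iff $\neg p \notin P'$), $[\tau_e]_{P'} = [\mathcal{F}_P(e)]_{P'}$.
   Context: A predicate is an atomic formula or its negation; a finite set of predicates is identified with the conjunction of its elements. For a set $H$ of predicates, $\widetilde{H} := \{\neg h : h \in H\}$. A minterm over $P$ is a conjunction containing, for each $p \in P$, exactly one of $p$, $\neg p$. $\mathcal{F}_P(e)$ is the disjunction of all minterms $c$ over $P$ such that $\neg c \vee e$ is valid in $T$; it is a Boolean combination of predicates of $P$, and $[\mathcal{F}_P(e)]_{P'}$ denotes its truth value when each $p\in P$ is assigned ${\tt true}$ iff $p\in P'$. The theory $T$ comes with inference rules; a rule instance is written $g \mathrel{:-} g_1,\dots,g_k$, meaning that $g$ (a predicate, or the contradiction symbol $\bot$) can be derived in one step from predicates $g_1,\dots,g_k$. Saturation procedure $\mathrm{Sat}_N(H)$ (finite set $H$, integer $N\ge 0$): (1) $W := H$. (2) Repeat $N$ times: $W' := W$; for every predicate $g \notin W'$ for which there is a rule instance $g \mathrel{:-} g_1,\dots,g_k$ with all $g_j \in W'$, add $g$ to $W$. (3) Return UNSATISFIABLE if there is a rule instance $\bot \mathrel{:-} g_1,\dots,g_k$ with all $g_j\in W$, else SATISFIABLE. $T$ is a bounded saturation theory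 if there is a function $d_T$ on finite sets of predicates such that for every $N \ge d_T(H)$, $\mathrm{Sat}_N(H)$ returns UNSATISFIABLE iff $H$ is unsatisfiable in $T$. For a finite set $S$, $D_T(S) := \max\{d_T(S') : S' \subseteq S\}$. $\mathit{SDP}_T(G,E)$: introduce a Boolean variable $b_g$ for each $g\in G$ (the set $B_G$); let $N := D_T(G\cup\widetilde{E})$. (1) $W := G \cup \widetilde{E}$; $\tau_{(g,0)} := b_g$ for $g\in G$; $\tau_{(\neg e_i,0)} := {\tt true}$ for $e_i\in E$. (2) For $i=1,\dots,N$: $W' := W$; $S(g):=\emptyset$ for every $g$; for every $g\in W'$ add $\tau_{(g,i-1)}$ to $S(g)$; for every predicate $g$ and every rule instance $g \mathrel{:-} g_1,\dots,g_k$ with all $g_m\in W'$, add $\bigwedge_m \tau_{(g_m,i-1)}$ to $S(g)$ and add $g$ to $W$; then for $g\in W$ set $\tau_{(g,i)} := \bigvee_{d\in S(g)} d$ and $\tau_{(g,\top)} := \tau_{(g,i)}$. (3) $\tau_e := \bigvee$ of $\bigwedge_m \tau_{(g_m,\top)}$ over all rule instances $\bot \mathrel{:-} g_1,\dots,g_k$ with all $g_m\in W$ (empty disjunction is ${\tt false}$). (4) Return $\tau_e$. For $G'\subseteq G$, $[\tau]_{G'}$ is the value of $\tau$ with each $b_g$ replaced by ${\tt true}$ if $g\in G'$ and ${\tt false}$ otherwise. *)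

From mathcomp Require Import all_boot.
From mathcomp Require Import finmap.
Set Implicit Arguments. Unset Strict Implicit. Unset Printing Implicit Defensive.
Local Open Scope fset_scope.

(* A first-order theory T, presented semantically by a class of models and   *)
(* a satisfaction relation on atoms, together with its inference rules.       *)
(* A predicate (literal) is an atom with a polarity: (a, true) is the atom a,  *)
(* (a, false) is its negation.  A rule instance  g :- g1,...,gk  is           *)
(* [rule (Some g) [:: g1; ...; gk]];  bot :- g1,...,gk is [rule None ...].    *)
Record theory := Theory {
  atom : choiceType;
  model : Type;
  satA : model -> atom -> Prop;
  rule : option (atom * bool) -> seq (atom * bool) -> Prop
}.

Section Defs.
Variable T : theory.

Definition pred_ := (atom T * bool)%type.

Definition negp (p : pred_) : pred_ := (p.1, ~~ p.2).

Definition negset (H : {fset pred_}) : {fset pred_} := [fset negp h | h in H].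

Definition satp (m : model T) (p : pred_) : Prop :=
  if p.2 then satA m p.1 else ~ satA m p.1.

Definition unsat (H : {fset pred_}) : Prop :=
  forall m : model T, ~ (forall h, h \in H -> satp m h).

Fixpoint satW (H : {fset pred_}) (i : nat) (g : pred_) : Prop :=
  match i with
  | 0 => g \in H
  | i'.+1 => satW H i' g \/
      exists gs, @rule T (Some g) gs /\ (forall x, x \in gs -> satW H i' x)
  end.

Definition Sat_unsat (N : nat) (H : {fset pred_}) : Prop :=
  exists gs, @rule T None gs /\ (forall x, x \in gs -> satW H N x).

Definition bounded_saturation (d : {fset pred_} -> nat) : Prop :=
  forall (H : {fset pred_}) (N : nat), d H <= N -> (Sat_unsat N H <-> unsat H).

Definition DT (d : {fset pred_} -> nat) (S : {fset pred_}) : nat :=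
  \max_(S' <- fpowerset S) d S'.

Section SDP.
Variables (d : {fset pred_} -> nat) (G E : {fset pred_}).

Definition sdpN : nat := DT d (G `|` negset E).

Fixpoint sdpW (i : nat) (g : pred_) : Prop :=
  match i with
  | 0 => g \in G `|` negset E
  | i'.+1 => sdpW i' g \/
      exists gs, @rule T (Some g) gs /\ (forall x, x \in gs -> sdpW i' x)
  end.

(* [tau_(g,i)]_{G'} : the value of the formula tau_(g,i) when each b_h is     *)
(* replaced by (h \in G').  tau_(g,0) is b_g for g in G, and true for         *)
(* g = ~e_i with e_i in E (the latter assignment is performed last).          *)
Fixpoint tau_val (G' : {fset pred_}) (i : nat) (g : pred_) : Prop :=
  match i with
  | 0 => if g \in negset E then True else g \in G'
  | i'.+1 =>
      (sdpW i' g /\ tau_val G' i' g) \/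
      exists gs, @rule T (Some g) gs /\ (forall x, x \in gs -> sdpW i' x) /\
                 (forall x, x \in gs -> tau_val G' i' x)
  end.

(* [tau_e]_{G'} where tau_e = SDP_T(G, E); tau_(g,top) = tau_(g,N) *)
Definition SDP_val (G' : {fset pred_}) : Prop :=
  exists gs, @rule T None gs /\ (forall x, x \in gs -> sdpW sdpN x) /\
             (forall x, x \in gs -> tau_val G' sdpN x).
End SDP.

(* The minterm over P given by a choice s : for p in P the conjunct is p if  *)
(* s p, and ~p otherwise.                                                    *)
Definition minterm_conj (P : {fset pred_}) (s : pred_ -> bool) (m : model T) : Prop :=
  forall p, p \in P -> satp m (if s p then p else negp p).

Definition minterm_valid (P E : {fset pred_}) (s : pred_ -> bool) : Prop :=
  forall m : model T, ~ minterm_conj P s m \/ exists2 ei, ei \in E & satp m ei.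

Definition minterm_eval (P : {fset pred_}) (s : pred_ -> bool) (P' : {fset pred_}) : bool :=
  [forall p : P, if s (val p) then val p \in P' else val p \notin P'].

(* [F_P(e)]_{P'}: some minterm in the disjunction F_P(e) evaluates to true *)
Definition F_val (P E P' : {fset pred_}) : Prop :=
  exists s : pred_ -> bool, minterm_valid P E s /\ minterm_eval P s P'.

End Defs.

From mathcomp Require Import all_boot.
From mathcomp Require Import finmap.
From Stdlib Require Import Classical.
Local Open Scope fset_scope.

(* Substituting [b_g := (g \in G')] into the formulas built by SDP turns each
   [tau_(g,i)] into "g belongs to the i-th saturation set of G' u ~E", so
   [[tau_e]_G'] says that Sat_N(G' u ~E) returns UNSATISFIABLE.  As G' u ~E is
   a subset of G u ~E, N = D_T(G u ~E) bounds d_T(G' u ~E), and bounded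
   saturation makes this the unsatisfiability of G' u ~E.  When G' = P'
   represents the minterm c over P, that unsatisfiability says that ~c \/ e
   is valid, and c is the only minterm true under P', so it is [F_P(e)]_P'. *)

Section Predicates.
Context {T : theory}.

Lemma satp_negp (m : model T) (p : pred_ T) : satp m (negp p) <-> ~ satp m p.
Proof. rewrite /satp /negp; case: p => a [] /=; last split=> [|/NNPP]; tauto. Qed.

Lemma unsat_fsetU_negset (H E : {fset pred_ T}) :
  unsat (H `|` negset E) <->
  forall m, ~ (forall h, h \in H -> satp m h) \/ exists2 e, e \in E & satp m e.
Proof.
split=> [Hunsat m | Hvalid m Hsat].
  apply: NNPP => /not_or_and [/NNPP HsatH HnotE]; apply: (Hunsat m) => h.
  rewrite in_fsetU => /orP [//|/imfsetP [e /= eE ->]]; first exact: HsatH.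
  by apply/satp_negp => se; apply: HnotE; exists e.
case: (Hvalid m) => [|[e eE]]; first by apply=> h hH; apply: Hsat; rewrite in_fsetU hH.
by apply/satp_negp/Hsat; rewrite in_fsetU in_imfset ?orbT.
Qed.

End Predicates.

Section SDPEvaluation.
Context {T : theory}.
Variables (G E G' : {fset pred_ T}).
Hypothesis subG' : G' `<=` G.

Lemma sdpW_tau_val i g : tau_val G E G' i g -> sdpW G E i g.
Proof.
elim: i g => [|i IH] g /=.
  by case: ifP => [gE _|_ gG']; rewrite in_fsetU ?gE ?orbT // (fsubsetP subG').
by case=> [[]|[gs [r [gsW _]]]]; [left | right; exists gs].
Qed.

Lemma tau_valE i g : tau_val G E G' i g <-> satW (G' `|` negset E) i g.
Proof.
elim: i g => [|i IH] g /=; first by rewrite in_fsetU; case: ifP; rewrite ?orbT ?orbF.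
split=> [[[_ /IH] | [gs [r [_ gs_tau]]]] | [/IH g_tau | [gs [r gs_sat]]]].
- by left.
- by right; exists gs; split=> // x /gs_tau /IH.
- by left; split=> //; apply: sdpW_tau_val.
- by right; exists gs; split=> //; split=> x /gs_sat /IH //; apply: sdpW_tau_val.
Qed.

Lemma d_le_sdpN (d : {fset pred_ T} -> nat) : d (G' `|` negset E) <= sdpN d G E.
Proof.
apply: (leq_bigmax_seq (F := d)) => //.
by rewrite fpowersetE; apply: fsetSU.
Qed.

Lemma SDP_val_unsat (d : {fset pred_ T} -> nat) :
  bounded_saturation d -> SDP_val d G E G' <-> unsat (G' `|` negset E).
Proof.
move=> bs; rewrite -(bs _ _ (d_le_sdpN d)) /SDP_val /Sat_unsat.
split=> [[gs [r [_ gs_tau]]] | [gs [r gs_sat]]]; exists gs.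
  by split=> // x /gs_tau /tau_valE.
by split=> //; split=> x /gs_sat /tau_valE //; apply: sdpW_tau_val.
Qed.

End SDPEvaluation.

Section Minterms.
Context {T : theory}.
Variables (P E : {fset pred_ T}).

Lemma minterm_evalP (s : pred_ T -> bool) (P' : {fset pred_ T}) :
  reflect {in P, s =1 [in P']} (minterm_eval P s P').
Proof.
apply: (iffP forallP) => [s_eval p pP | s_mem p].
  by have := s_eval [`pP]; case: (s p); case: (p \in P').
by rewrite s_mem ?fsvalP //=; case: ifP => ->.
Qed.

Lemma eq_in_minterm_valid (s1 s2 : pred_ T -> bool) :
  {in P, s1 =1 s2} -> minterm_valid P E s1 -> minterm_valid P E s2.
Proof.
move=> s12 valid1 m; case: (valid1 m) => [not_c1|]; last by right.
by left=> c2; apply: not_c1 => p pP; rewrite s12 //; apply: c2.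
Qed.

Lemma F_val_mem (P' : {fset pred_ T}) : F_val P E P' <-> minterm_valid P E [in P'].
Proof.
split=> [[s [valid /minterm_evalP s_mem]] | valid].
  exact: eq_in_minterm_valid valid.
by exists [in P']; split=> //; apply/minterm_evalP.
Qed.

Variable P' : {fset pred_ T}.
Hypothesis subP' : P' `<=` P `|` negset P.
Hypothesis P'_minterm : forall p, p \in P -> (p \in P') = (negp p \notin P').

Lemma minterm_conj_mem m :
  (forall h, h \in P' -> satp m h) <-> minterm_conj P [in P'] m.
Proof.
split=> [sat_P' p pP | c h hP'].
  case: ifP => [/sat_P' // | notpP']; apply: sat_P'.
  by move: notpP'; rewrite (P'_minterm p pP); case: (negp p \in P').
move: (fsubsetP subP' h hP'); rewrite in_fsetU => /orP [hP|].
  by have := c h hP; rewrite /= hP'.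
case/imfsetP=> p /= pP h_negp; rewrite h_negp in hP' *.
by have := c p pP; rewrite /= (P'_minterm p pP) hP'.
Qed.

Lemma unsat_minterm_valid : unsat (P' `|` negset E) <-> minterm_valid P E [in P'].
Proof.
rewrite unsat_fsetU_negset.
by split=> valid m; case: (valid m) => [not_sat|]; auto; left=> /minterm_conj_mem.
Qed.

End Minterms.

Theorem corollary3p5 (T : theory) (d : {fset pred_ T} -> nat) :
  bounded_saturation d ->
  forall (P E P' : {fset pred_ T}),
    P' `<=` P `|` negset P ->
    (forall p, p \in P -> (p \in P') = (negp p \notin P')) ->
    (SDP_val d (P `|` negset P) E P' <-> F_val P E P').
Proof.
move=> bs P E P' subP' P'_minterm.
rewrite SDP_val_unsat // F_val_mem.
exact: unsat_minterm_valid.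
Qed.
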